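(* Assume $h$ satisfies Assumption 1. If $B^s\ge B^d+1$, then $\hat B^d=B^d$ and $\hat\epsilon(x,i)=0$ for all $i\in\{0,1\}$ and $x=0,1,\dots,B^s$.
   Context: Parameters: $\lambda>0$, $0<\mu_l<\mu_h$, $\delta=\mu_h-\mu_l$, $\Lambda=\lambda+\mu_h$, $R\ge 0$, $c>0$, discount rate $\beta>0$ with the normalization $\Lambda+\beta=1$, and $h:\{0,1,2,\dots\}\to\mathbb{R}$ nondecreasing and convex with $h(0)=0$. Assumption 1: (1) there is $\theta>1$ with $h(x+1)\le\theta h(x)$ for all $x>0$; (2) there exist $\gamma\in[0,1)$ and a positive integer $J$ with $\left(\frac{\Lambda}{\Lambda+\beta}\right)^J[R+c+h(x+J)]\le\gamma[R+c+h(x)]$ for all $x\ge0$. Combined problem finite-horizon values on $S=\{0,1,\dots\}\times\{0,1\}$: $v_0\equiv0$, $v_{n+1}(0,0)=\lambda v_n(0,1)+\mu_h v_n(0,0)$; $v_{n+1}(x,0)=-h(x)+\lambda v_n(x,1)+\mu_l v_n(x-1,0)+\max\{\delta v_n(x,0),-c+\delta v_n(x-1,0)\}$ for $x\ge1$; $v_{n+1}(x,1)=\max\{R+v_{n+1}(x+1,0),v_{n+1}(x,0)\}$. Admission-control subproblem: $\hat v$ defined identically except that the max in the $(x,0)$ equation is replaced by $\delta\hat v_n(x,0)$ (service rate always $\mu_l$). Infinite-horizon values: $v=\lim_n v_n$ and $\hat v=\lim_n\hat v_n$ (pointwise limits, which exist under Assumption 1); they are the optimal infinite-horizon discounted profits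 of the combined problem and of the admission control subproblem. $\hat\epsilon(x,i)=v(x,i)-\hat v(x,i)$ (value of service flexibility). With $\Delta(x,0)=v(x,0)-v(x+1,0)$, $\hat\Delta(x,0)=\hat v(x,0)-\hat v(x+1,0)$ and $T_f(\theta)=\sup\{k\ge0:f(k)\le\theta\}$ ($\sup\emptyset=-1$, $+\infty$ allowed), the stationary optimal thresholds are $B^s=1+T_{\Delta(\cdot,0)}(c/\delta)$ (high rate used in states $x>B^s$, low rate otherwise), $B^d=T_{\Delta(\cdot,0)}(R)$ (admit iff $x\le B^d$) for the combined problem, and $\hat B^d=T_{\hat\Delta(\cdot,0)}(R)$ for the subproblem. *)

From Stdlib Require Import Reals Lra ZArith.
Open Scope R_scope.

(* States (x,i): x : nat, i : bool with false = 0, true = 1. *)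

(* One step of value iteration for the combined problem.
   lam, mul, muh are lambda, mu_l, mu_h; rw is the reward R; c the cost. *)
Definition step_comb (lam mul muh rw c : R) (h : nat -> R)
  (v : nat -> bool -> R) : nat -> bool -> R :=
  let delta := muh - mul in
  let w0 := fun x : nat => match x with
    | O => lam * v O true + muh * v O false
    | S y => - h x + lam * v x true + mul * v y false
             + Rmax (delta * v x false) (- c + delta * v y false)
    end in
  fun x i => if i then Rmax (rw + w0 (S x)) (w0 x) else w0 x.

(* Admission-control subproblem: service rate always mu_l. *)
Definition step_adm (lam mul muh rw : R) (h : nat -> R)
  (v : nat -> bool -> R) : nat -> bool -> R :=
  let delta := muh - mul in
  let w0 := fun x : nat => match x with
    | O => lam * v O true + muh * v O false
    | S y => - h x + lam * v x true + mul * v y false + delta * v x false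
    end in
  fun x i => if i then Rmax (rw + w0 (S x)) (w0 x) else w0 x.

Definition vn (lam mul muh rw c : R) (h : nat -> R) (n : nat) : nat -> bool -> R :=
  Nat.iter n (step_comb lam mul muh rw c h) (fun _ _ => 0).

Definition vhatn (lam mul muh rw : R) (h : nat -> R) (n : nat) : nat -> bool -> R :=
  Nat.iter n (step_adm lam mul muh rw h) (fun _ _ => 0).

Inductive ext : Type := Fin (z : Z) | PInf.

Definition ext_le (a b : ext) : Prop :=
  match a, b with
  | _, PInf => True
  | PInf, Fin _ => False
  | Fin x, Fin y => (x <= y)%Z
  end.

Definition ext_add1 (a : ext) : ext :=
  match a with Fin z => Fin (z + 1) | PInf => PInf end.

(* T_f(theta) = sup {k >= 0 : f k <= theta}, with sup of the empty set = -1
   and +∞ allowed: [is_T f theta t] says t is this supremum (least upper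
   bound in Z ∪ {+∞} of the set, taken together with the convention -1). *)
Definition is_T (f : nat -> R) (theta : R) (t : ext) : Prop :=
  ext_le (Fin (-1)) t /\
  (forall k : nat, f k <= theta -> ext_le (Fin (Z.of_nat k)) t) /\
  (forall u : ext, ext_le (Fin (-1)) u ->
     (forall k : nat, f k <= theta -> ext_le (Fin (Z.of_nat k)) u) ->
     ext_le t u).

(* Write e(x) = v(x,0) - vhat(x,0) and eT(x) = v(x,1) - vhat(x,1) for the value of
   service flexibility, and Delta(x) = v(x,0) - v(x+1,0).
   1. Value iteration preserves "nonincreasing and concave" (dec_concave), the
      comparison vhat <= v and simple a priori bounds; all pass to the limits, which
      also satisfy the Bellman equations (section Model).
   2. Up to B^s the low rate is optimal in the combined problem, so there e obeys the
      subproblem's balance equation e = lam eT + mul e(x-1) + delta e(x); admission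
      gives eT(x) <= e(x+1) where the combined problem admits and eT(x) <= e(x) else.
   3. For finite B^d a discrete maximum principle forces e = 0 on [0, B^s]
      (max_principle).  For B^d = +oo, a positive e would grow geometrically at rate
      (lam + beta)/lam, which Assumption 1(2) excludes (balanced_bounded_vanishes).
   4. Then eT = 0 as well, Delta and its subproblem analogue define the same
      admission region, and the two admission thresholds coincide. *)

From Stdlib Require Import Reals Lra Lia ZArith.
Open Scope R_scope.

Lemma cv_const (a : R) : Un_cv (fun _ => a) a.
Proof.
  intros eps Heps. exists 0%nat. intros n _.
  unfold R_dist. rewrite Rminus_diag, Rabs_R0. lra.
Qed.

Lemma cv_scal (a : R) (u : nat -> R) (l : R) :
  Un_cv u l -> Un_cv (fun n => a * u n) (a * l).
Proof. intro Hu. apply (CV_mult (fun _ => a)); [apply cv_const | exact Hu]. Qed.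

Lemma cv_max (u w : nat -> R) (lu lw : R) :
  Un_cv u lu -> Un_cv w lw -> Un_cv (fun n => Rmax (u n) (w n)) (Rmax lu lw).
Proof.
  intros Hu Hw eps Heps.
  destruct (Hu eps Heps) as [N1 H1]. destruct (Hw eps Heps) as [N2 H2].
  exists (Nat.max N1 N2). intros n Hn.
  assert (A := H1 n ltac:(lia)). assert (B := H2 n ltac:(lia)).
  unfold R_dist in *. apply Rabs_def2 in A. apply Rabs_def2 in B.
  apply Rabs_def1; unfold Rmax; repeat destruct Rle_dec; lra.
Qed.

Lemma cv_shift1 (u : nat -> R) (l : R) : Un_cv u l -> Un_cv (fun n => u (S n)) l.
Proof. intros Hu eps Heps. destruct (Hu eps Heps) as [N HN]. exists N. intros n Hn. apply HN. lia. Qed.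

(* If u satisfies the recursion u (n+1) = w n, then u and w have the same limit.
   This is how Bellman equations pass from value iteration to the limit. *)
Lemma cv_recursion (u w : nat -> R) (l m : R) :
  (forall n, u (S n) = w n) -> Un_cv u l -> Un_cv w m -> l = m.
Proof.
  intros E Hu Hw. apply (UL_sequence w); [|exact Hw].
  intros eps Heps. destruct (cv_shift1 u l Hu eps Heps) as [N HN].
  exists N. intros n Hn. rewrite <- E. apply HN, Hn.
Qed.

Lemma nondecr_le (f : nat -> R) :
  (forall k, f k <= f (S k)) -> forall j k, (j <= k)%nat -> f j <= f k.
Proof. intros H j k Hjk. induction Hjk as [|k _ IH]; [lra | pose proof (H k); lra]. Qed.

Lemma finite_argmax (g : nat -> R) (n : nat) :
  exists z, (z <= n)%nat /\ forall y, (y <= n)%nat -> g y <= g z.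
Proof.
  induction n as [|n [z [Hz Hmax]]].
  - exists 0%nat. split; [lia|]. intros y Hy. replace y with 0%nat by lia. lra.
  - destruct (Rle_dec (g z) (g (S n))).
    + exists (S n). split; [lia|]. intros y Hy.
      destruct (Nat.eq_dec y (S n)); [subst; lra|]. pose proof (Hmax y ltac:(lia)). lra.
    + exists z. split; [lia|]. intros y Hy.
      destruct (Nat.eq_dec y (S n)); [subst; lra | apply Hmax; lia].
Qed.

(* Iterating the growth condition of Assumption 1(2) N times. *)
Lemma decay_iterate (q gamma : R) (J : nat) (phi : nat -> R) :
  0 <= q -> gamma <= 1 -> (forall x, 0 <= phi x) ->
  (forall x, q ^ J * phi (x + J)%nat <= gamma * phi x) ->
  forall N x, q ^ (N * J) * phi (x + N * J)%nat <= phi x.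
Proof.
  intros Hq Hg Hphi HA N x. induction N as [|N IH].
  - rewrite Nat.add_0_r. simpl. lra.
  - replace (S N * J)%nat with (J + N * J)%nat by (simpl; lia).
    replace (x + (J + N * J))%nat with (x + N * J + J)%nat by lia.
    rewrite pow_add.
    pose proof (HA (x + N * J)%nat) as Hstep.
    pose proof (pow_le q (N * J) Hq) as HqN.
    pose proof (Hphi (x + N * J)%nat).
    assert (gamma * phi (x + N * J)%nat <= phi (x + N * J)%nat) by nra.
    pose proof (Rmult_le_compat_l _ _ _ HqN Hstep). nra.
Qed.

(** Nonincreasing concave sequences *)

Definition dec_concave (g : nat -> R) : Prop :=
  0 <= g 0%nat - g 1%nat /\ forall x, g x - g (S x) <= g (S x) - g (S (S x)).

Lemma dec_concave_ext (f g : nat -> R) :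
  (forall x, f x = g x) -> dec_concave f -> dec_concave g.
Proof. intros E [H0 H]. split; [rewrite <- !E; exact H0 | intro x; rewrite <- !E; apply H]. Qed.

Lemma dec_concave_diff_nonneg (g : nat -> R) :
  dec_concave g -> forall x, 0 <= g x - g (S x).
Proof. intros [H0 H] x. induction x as [|x IH]; [exact H0 | pose proof (H x); lra]. Qed.

Lemma dec_concave_const (a : R) : dec_concave (fun _ => a).
Proof. split; intros; lra. Qed.

Lemma dec_concave_plus (f g : nat -> R) :
  dec_concave f -> dec_concave g -> dec_concave (fun x => f x + g x).
Proof.
  intros [A B] [C D]. split; [lra | intro x; specialize (B x); specialize (D x); lra].
Qed.

Lemma dec_concave_scal (a : R) (g : nat -> R) :
  0 <= a -> dec_concave g -> dec_concave (fun x => a * g x).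
Proof.
  intros Ha [A B]. split.
  - replace (a * g 0%nat - a * g 1%nat) with (a * (g 0%nat - g 1%nat)) by ring.
    apply Rmult_le_pos; assumption.
  - intro x.
    replace (a * g x - a * g (S x)) with (a * (g x - g (S x))) by ring.
    replace (a * g (S x) - a * g (S (S x))) with (a * (g (S x) - g (S (S x)))) by ring.
    apply Rmult_le_compat_l; auto.
Qed.

(* A departure, with the convention that nothing departs from the empty queue. *)
Lemma dec_concave_pred (g : nat -> R) :
  dec_concave g -> dec_concave (fun x => g (pred x)).
Proof. intros [A B]. split; simpl; [lra | intros [|x]; simpl; [lra | apply B]]. Qed.

(* Optimal admission: take the better of admitting (reward r) and rejecting. *)
Lemma dec_concave_admission (r : R) (g : nat -> R) :
  dec_concave g -> dec_concave (fun x => Rmax (r + g (S x)) (g x)).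
Proof.
  intros Hg. pose proof (dec_concave_diff_nonneg g Hg) as N. destruct Hg as [A B]. split.
  - pose proof (N 0%nat). pose proof (B 0%nat). unfold Rmax; repeat destruct Rle_dec; lra.
  - intro x. pose proof (B x). pose proof (B (S x)). pose proof (N x).
    unfold Rmax; repeat destruct Rle_dec; lra.
Qed.

(* Optimal speed choice: keep the low rate, or pay c for an extra departure. *)
Lemma dec_concave_service (c : R) (g : nat -> R) :
  0 <= c -> dec_concave g -> dec_concave (fun x => Rmax (g x) (- c + g (pred x))).
Proof.
  intros Hc Hg. pose proof (dec_concave_diff_nonneg g Hg) as N. destruct Hg as [A B].
  split; simpl.
  - unfold Rmax; repeat destruct Rle_dec; lra.
  - intros [|x]; simpl.
    + pose proof (B 0%nat). unfold Rmax; repeat destruct Rle_dec; lra.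
    + pose proof (B x). pose proof (B (S x)). pose proof (N x).
      unfold Rmax; repeat destruct Rle_dec; lra.
Qed.

Lemma dec_concave_limit (g : nat -> nat -> R) (G : nat -> R) :
  (forall x, Un_cv (fun n => g n x) (G x)) -> (forall n, dec_concave (g n)) ->
  dec_concave G.
Proof.
  intros Hcv Hg. split.
  - apply (@Rle_cv_lim (fun _ => 0) (fun n => g n 0%nat - g n 1%nat));
      [intro n; apply (Hg n) | apply cv_const | apply CV_minus; apply Hcv].
  - intro x.
    apply (@Rle_cv_lim (fun n => g n x - g n (S x)) (fun n => g n (S x) - g n (S (S x))));
      [intro n; apply (Hg n) | apply CV_minus; apply Hcv | apply CV_minus; apply Hcv].
Qed.

(** Thresholds [T_f(theta)] *)

Lemma T_upper (f : nat -> R) (th : R) (t : ext) (k : nat) :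
  is_T f th t -> f k <= th -> ext_le (Fin (Z.of_nat k)) t.
Proof. intros [_ [H _]] Hk. auto. Qed.

Lemma T_below (f : nat -> R) (th : R) (t : ext) (j : nat) :
  (forall k, f k <= f (S k)) -> is_T f th t ->
  ext_le (Fin (Z.of_nat j)) t -> f j <= th.
Proof.
  intros Hm [H1 [H2 H3]] Hj. destruct (Rle_dec (f j) th) as [|Hn]; [assumption|]. exfalso.
  assert (U : ext_le t (Fin (Z.of_nat j - 1))).
  { apply H3; [simpl; lia|]. intros k Hk. simpl.
    destruct (le_lt_dec j k) as [Hjk|Hjk]; [|lia].
    pose proof (nondecr_le f Hm j k Hjk). lra. }
  destruct t; simpl in *; lia.
Qed.

Lemma T_unique (f : nat -> R) (th : R) (t t' : ext) :
  is_T f th t -> is_T f th t' -> t = t'.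
Proof.
  intros [A1 [A2 A3]] [B1 [B2 B3]].
  pose proof (A3 t' B1 B2). pose proof (B3 t A1 A2).
  destruct t, t'; simpl in *; try tauto. f_equal; lia.
Qed.

Lemma T_transfer (f g : nat -> R) (th th' : R) (t : ext) :
  (forall k, f k <= th <-> g k <= th') -> is_T f th t -> is_T g th' t.
Proof.
  intros E [A1 [A2 A3]]. split; [exact A1 | split].
  - intros k Hk. apply A2, E, Hk.
  - intros u Hu Hk. apply A3; [exact Hu|]. intros k Hk'. apply Hk, E, Hk'.
Qed.

(** The value of flexibility under the low-rate balance equation *)

(* [e] obeys at state x the balance equation of a queue served at the low rate mul
   (uniformized with total rate lam + muh): [eT] is the value after an arrival,
   [e (pred x)] after a departure, and the fictitious transitions keep the state. *)
Definition balanced (lam mul muh : R) (e eT : nat -> R) (x : nat) : Prop :=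
  e x = lam * eT x + mul * e (pred x) + (muh - mul) * e x.

Section Balance.
Variables lam mul muh beta : R.
Hypotheses (Hlam : 0 < lam) (Hmul : 0 <= mul) (Hmulh : mul < muh) (Hbeta : 0 < beta)
  (Hnorm : lam + muh + beta = 1).
Variables e eT : nat -> R.
Hypothesis He : forall x, 0 <= e x.

(* Discrete maximum principle: on [0, n], a nonnegative [e] that is balanced and whose
   arrival value [eT x] is dominated by [e x] or by [e (x+1)] inside [0, n] vanishes,
   because at a maximiser z the balance equation yields beta * e z <= 0. *)
Lemma max_principle (n : nat) :
  (forall x, (x <= n)%nat -> balanced lam mul muh e eT x) ->
  (forall x, (x <= n)%nat -> eT x <= e x \/ ((x < n)%nat /\ eT x <= e (S x))) ->
  forall x, (x <= n)%nat -> e x = 0.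
Proof.
  intros Hbal Hadm.
  destruct (finite_argmax e n) as [z [Hz Hmax]].
  assert (HT : eT z <= e z).
  { destruct (Hadm z Hz) as [|[Hzn HS]]; [assumption|].
    eapply Rle_trans; [exact HS | apply Hmax; lia]. }
  assert (HP : e (pred z) <= e z) by (apply Hmax; lia).
  assert (Hz0 : e z <= 0).
  { pose proof (Hbal z Hz) as B. unfold balanced in B.
    pose proof (Rmult_le_compat_l _ _ _ (Rlt_le _ _ Hlam) HT).
    pose proof (Rmult_le_compat_l _ _ _ Hmul HP).
    nra. }
  intros x Hx. pose proof (Hmax x Hx). pose proof (He x). lra.
Qed.

Lemma balance_growth_step (y : nat) :
  balanced lam mul muh e eT y -> eT y <= e (S y) -> e (pred y) <= e y ->
  (lam + beta) * e y <= lam * e (S y) /\ e y <= e (S y).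
Proof.
  intros B HT HP. unfold balanced in B.
  pose proof (Rmult_le_compat_l _ _ _ (Rlt_le _ _ Hlam) HT).
  pose proof (Rmult_le_compat_l _ _ _ Hmul HP).
  pose proof (He y).
  assert (G : (lam + beta) * e y <= lam * e (S y)) by nra.
  split; [exact G|].
  apply (Rmult_le_reg_l lam); [exact Hlam|]. nra.
Qed.

Lemma geometric_growth (x : nat) :
  (forall y, balanced lam mul muh e eT y) -> (forall y, eT y <= e (S y)) ->
  e (pred x) <= e x ->
  forall n, (lam + beta) ^ n * e x <= lam ^ n * e (x + n)%nat.
Proof.
  intros Hbal Hadm Hx.
  assert (Inv : forall n, e (pred (x + n)) <= e (x + n)%nat /\
                          (lam + beta) ^ n * e x <= lam ^ n * e (x + n)%nat).
  { induction n as [|n [IH1 IH2]].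
    - rewrite Nat.add_0_r. simpl. split; lra.
    - rewrite Nat.add_succ_r.
      destruct (balance_growth_step _ (Hbal _) (Hadm _) IH1) as [G1 G2].
      split; [simpl; exact G2|].
      pose proof (pow_le lam n (Rlt_le _ _ Hlam)).
      pose proof (Rmult_le_compat_l _ _ _ H G1).
      pose proof (Rmult_le_compat_l (lam + beta) _ _ ltac:(lra) IH2).
      simpl. nra. }
  intro n. apply Inv.
Qed.

Lemma growth_factor_gt1 : 1 < (lam + muh) * (lam + beta) / lam.
Proof.
  apply (Rmult_lt_reg_r lam); [exact Hlam|]. unfold Rdiv.
  rewrite Rmult_assoc, Rinv_l by lra.
  replace beta with (1 - lam - muh) by lra.
  assert (0 < muh * (1 - lam - muh)) by (apply Rmult_lt_0_compat; lra). nra.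
Qed.

(* If [e] is balanced and dominated by [e (x+1)] after arrivals everywhere, and
   grows no faster than K + phi/beta with phi satisfying Assumption 1(2), then
   [e] vanishes: otherwise, from the first state where it is positive it would
   grow geometrically at rate (lam+beta)/lam, faster than the bound allows. *)
Lemma balanced_bounded_vanishes (phi : nat -> R) (K gamma : R) (J : nat) :
  (forall y, balanced lam mul muh e eT y) -> (forall y, eT y <= e (S y)) ->
  0 <= K -> (forall x, 0 <= phi x) -> (forall x, e x <= K + phi x / beta) ->
  gamma <= 1 -> (0 < J)%nat ->
  (forall x, (lam + muh) ^ J * phi (x + J)%nat <= gamma * phi x) ->
  forall x, e x = 0.
Proof.
  intros Hbal Hadm HK Hphi Hbd Hg HJ HA x.
  induction x as [x IH] using lt_wf_ind.
  destruct (Req_dec (e x) 0) as [|Hne]; [assumption|]. exfalso.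
  assert (Hpos : 0 < e x) by (pose proof (He x); lra).
  assert (Hstart : e (pred x) <= e x).
  { destruct x as [|x']; simpl; [lra|]. rewrite (IH x') by lia. lra. }
  set (q := lam + muh). set (r := q * (lam + beta) / lam). set (K' := K + phi x / beta).
  assert (Hr : 1 < r) by exact growth_factor_gt1.
  (* choose n = N J with r^n e x > K' *)
  destruct (Pow_x_infinity r ltac:(rewrite Rabs_right; lra) (K' / e x + 1)) as [N HN].
  set (n := (N * J)%nat).
  specialize (HN n ltac:(unfold n; nia)).
  rewrite Rabs_right in HN by (apply Rle_ge, pow_le; lra).
  assert (Hlarge : K' < r ^ n * e x).
  { assert (K' / e x * e x = K') by (field; lra). nra. }
  (* but q^n (lam+beta)^n e x <= q^n lam^n e (x+n) <= lam^n K', i.e. r^n e x <= K' *)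
  pose proof (geometric_growth x Hbal Hadm Hstart n) as Grow.
  pose proof (decay_iterate q gamma J phi ltac:(unfold q; lra) Hg Hphi HA N x) as Decay.
  fold n in Decay.
  assert (Hq0 : 0 <= q ^ n) by (apply pow_le; unfold q; lra).
  assert (Hq1 : q ^ n <= 1) by (rewrite <- (pow1 n); apply pow_incr; unfold q; lra).
  assert (Hlam_n : 0 < lam ^ n) by (apply pow_lt, Hlam).
  assert (Er : q ^ n * (lam + beta) ^ n = lam ^ n * r ^ n).
  { rewrite <- !Rpow_mult_distr. f_equal. unfold r. field. lra. }
  assert (Hfar : q ^ n * e (x + n)%nat <= K').
  { pose proof (Hbd (x + n)%nat).
    assert (q ^ n * (phi (x + n)%nat / beta) <= phi x / beta).
    { unfold Rdiv. rewrite <- Rmult_assoc.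
      apply Rmult_le_compat_r; [left; apply Rinv_0_lt_compat; lra | exact Decay]. }
    unfold K'. nra. }
  assert (Hsmall : lam ^ n * (r ^ n * e x) <= lam ^ n * K').
  { rewrite <- Rmult_assoc, <- Er, Rmult_assoc.
    pose proof (Rmult_le_compat_l _ _ _ Hq0 Grow). nra. }
  apply Rmult_le_reg_l in Hsmall; [lra | exact Hlam_n].
Qed.

End Balance.

(** The two control problems *)

Section Model.
Variables lam mul muh beta rw c : R.
Variable h : nat -> R.
Hypotheses (Hlam : 0 < lam) (Hmul : 0 < mul) (Hmulh : mul < muh)
  (Hrw : 0 <= rw) (Hc : 0 < c) (Hbeta : 0 < beta) (Hnorm : lam + muh + beta = 1).
Hypotheses (Hh0 : h 0%nat = 0) (Hmono : forall x : nat, h x <= h (S x))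
  (Hconv : forall x : nat, h (S x) - h x <= h (S (S x)) - h (S x)).

Local Notation V := (vn lam mul muh rw c h).
Local Notation W := (vhatn lam mul muh rw h).

Lemma h_nonneg (x : nat) : 0 <= h x.
Proof. induction x as [|x IH]; [lra | pose proof (Hmono x); lra]. Qed.

Lemma neg_h_dec_concave : dec_concave (fun x => - h x).
Proof. split; [pose proof (Hmono 0%nat); lra | intro x; pose proof (Hconv x); lra]. Qed.

(* One step of value iteration with the empty state written uniformly: since
   h 0 = 0 and c > 0, the formula for x >= 1 with [pred 0 = 0] is also correct at x = 0. *)
Lemma vn_succ_false (n x : nat) :
  V (S n) x false = - h x + lam * V n x true + mul * V n (pred x) false
    + Rmax ((muh - mul) * V n x false) (- c + (muh - mul) * V n (pred x) false).
Proof.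
  destruct x as [|x]; [|reflexivity].
  simpl. rewrite Rmax_left by lra. rewrite Hh0. ring.
Qed.

Lemma vn_succ_true (n x : nat) :
  V (S n) x true = Rmax (rw + V (S n) (S x) false) (V (S n) x false).
Proof. reflexivity. Qed.

Lemma vhatn_succ_false (n x : nat) :
  W (S n) x false = - h x + lam * W n x true + mul * W n (pred x) false
    + (muh - mul) * W n x false.
Proof. destruct x as [|x]; [|reflexivity]. simpl. rewrite Hh0. ring. Qed.

Lemma vhatn_succ_true (n x : nat) :
  W (S n) x true = Rmax (rw + W (S n) (S x) false) (W (S n) x false).
Proof. reflexivity. Qed.

Lemma vn_dec_concave (n : nat) :
  dec_concave (fun x => V n x false) /\ dec_concave (fun x => V n x true).
Proof.
  induction n as [|n [IHf IHt]]; [split; apply dec_concave_const|].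
  assert (C : dec_concave (fun x => V (S n) x false)).
  { eapply dec_concave_ext; [intro x; symmetry; apply vn_succ_false|].
    repeat apply dec_concave_plus.
    - exact neg_h_dec_concave.
    - apply dec_concave_scal; [lra | exact IHt].
    - apply dec_concave_scal; [lra | apply (dec_concave_pred (fun x => V n x false) IHf)].
    - apply (dec_concave_service c (fun x => (muh - mul) * V n x false)); [lra|].
      apply dec_concave_scal; [lra | exact IHf]. }
  split; [exact C | exact (dec_concave_admission rw _ C)].
Qed.

Lemma vhatn_dec_concave (n : nat) :
  dec_concave (fun x => W n x false) /\ dec_concave (fun x => W n x true).
Proof.
  induction n as [|n [IHf IHt]]; [split; apply dec_concave_const|].
  assert (C : dec_concave (fun x => W (S n) x false)).
  { eapply dec_concave_ext; [intro x; symmetry; apply vhatn_succ_false|].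
    repeat apply dec_concave_plus.
    - exact neg_h_dec_concave.
    - apply dec_concave_scal; [lra | exact IHt].
    - apply dec_concave_scal; [lra | apply (dec_concave_pred (fun x => W n x false) IHf)].
    - apply dec_concave_scal; [lra | exact IHf]. }
  split; [exact C | exact (dec_concave_admission rw _ C)].
Qed.

Lemma vhatn_le_vn (n : nat) : forall x i, W n x i <= V n x i.
Proof.
  induction n as [|n IH]; [intros; simpl; lra|].
  assert (F : forall x, W (S n) x false <= V (S n) x false).
  { intro x. rewrite vhatn_succ_false, vn_succ_false.
    pose proof (Rmult_le_compat_l lam _ _ ltac:(lra) (IH x true)).
    pose proof (Rmult_le_compat_l mul _ _ ltac:(lra) (IH (pred x) false)).
    pose proof (Rmult_le_compat_l (muh - mul) _ _ ltac:(lra) (IH x false)).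
    pose proof (Rmax_l ((muh - mul) * V n x false) (- c + (muh - mul) * V n (pred x) false)).
    lra. }
  intros x [|]; [|apply F].
  rewrite vhatn_succ_true, vn_succ_true.
  pose proof (F x). pose proof (F (S x)). unfold Rmax; repeat destruct Rle_dec; lra.
Qed.

Lemma vn_upper (n : nat) :
  forall x, V n x false <= lam * rw / beta /\ V n x true <= rw + lam * rw / beta.
Proof.
  set (U := lam * rw / beta).
  assert (HU : lam * rw + (lam + muh) * U = U)
    by (unfold U; replace (lam + muh) with (1 - beta) by lra; field; lra).
  assert (U0 : 0 <= U) by (unfold U, Rdiv; apply Rmult_le_pos; [nra | left; apply Rinv_0_lt_compat; lra]).
  induction n as [|n IH]; [intros; simpl; lra|].
  assert (F : forall x, V (S n) x false <= U).
  { intro x. rewrite vn_succ_false.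
    pose proof (Rmult_le_compat_l lam _ _ ltac:(lra) (proj2 (IH x))).
    pose proof (Rmult_le_compat_l mul _ _ ltac:(lra) (proj1 (IH (pred x)))).
    pose proof (Rmult_le_compat_l (muh - mul) _ _ ltac:(lra) (proj1 (IH x))).
    pose proof (Rmult_le_compat_l (muh - mul) _ _ ltac:(lra) (proj1 (IH (pred x)))).
    pose proof (h_nonneg x).
    assert (Rmax ((muh - mul) * V n x false) (- c + (muh - mul) * V n (pred x) false)
              <= (muh - mul) * U) by (apply Rmax_lub; lra).
    nra. }
  intro x. split; [apply F|].
  rewrite vn_succ_true. pose proof (F x). pose proof (F (S x)). apply Rmax_lub; lra.
Qed.

(* Profits of the subproblem are at least the cost -h x / beta of never admitting,
   using that the queue never grows without admissions. *)
Lemma vhatn_lower (n : nat) :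
  forall x, - h x / beta <= W n x false /\ - h x / beta <= W n x true.
Proof.
  assert (Hdiv : forall x, - h x / beta = - (h x / beta)) by (intro; unfold Rdiv; ring).
  assert (HL : forall x, 0 <= h x / beta)
    by (intro x; unfold Rdiv; apply Rmult_le_pos; [apply h_nonneg | left; apply Rinv_0_lt_compat; lra]).
  induction n as [|n IH].
  - intro x. simpl. rewrite Hdiv. pose proof (HL x). lra.
  - assert (F : forall x, - h x / beta <= W (S n) x false).
    { intro x. rewrite vhatn_succ_false.
      assert (HP : - h x / beta <= - h (pred x) / beta).
      { rewrite !Hdiv. apply Ropp_le_contravar. unfold Rdiv.
        apply Rmult_le_compat_r; [left; apply Rinv_0_lt_compat; lra|].
        destruct x; simpl; [lra | apply Hmono]. }
      pose proof (Rmult_le_compat_l lam _ _ ltac:(lra) (proj2 (IH x))).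
      pose proof (Rmult_le_compat_l mul _ _ ltac:(lra) (Rle_trans _ _ _ HP (proj1 (IH (pred x))))).
      pose proof (Rmult_le_compat_l (muh - mul) _ _ ltac:(lra) (proj1 (IH x))).
      assert (E : - h x + lam * (- h x / beta) + mul * (- h x / beta)
                  + (muh - mul) * (- h x / beta) = - h x / beta).
      { replace lam with (1 - beta - muh) by lra. field. lra. }
      lra. }
    intro x. split; [apply F|].
    rewrite vhatn_succ_true. eapply Rle_trans; [apply F | apply Rmax_r].
Qed.

(** The infinite-horizon values *)

Variables v vhat : nat -> bool -> R.
Hypothesis Hv : forall x i, Un_cv (fun n => V n x i) (v x i).
Hypothesis Hvhat : forall x i, Un_cv (fun n => W n x i) (vhat x i).

Lemma v_dec_concave : dec_concave (fun x => v x false).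
Proof.
  apply (dec_concave_limit (fun n x => V n x false));
    [intro x; apply Hv | intro n; apply vn_dec_concave].
Qed.

Lemma vhat_dec_concave : dec_concave (fun x => vhat x false).
Proof.
  apply (dec_concave_limit (fun n x => W n x false));
    [intro x; apply Hvhat | intro n; apply vhatn_dec_concave].
Qed.

Lemma vhat_le_v (x : nat) (i : bool) : vhat x i <= v x i.
Proof.
  apply (@Rle_cv_lim (fun n => W n x i) (fun n => V n x i));
    [intro n; apply vhatn_le_vn | apply Hvhat | apply Hv].
Qed.

Lemma v_upper (x : nat) : v x false <= lam * rw / beta.
Proof.
  apply (@Rle_cv_lim (fun n => V n x false) (fun _ => lam * rw / beta));
    [intro n; apply vn_upper | apply Hv | apply cv_const].
Qed.

Lemma vhat_lower (x : nat) : - h x / beta <= vhat x false.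
Proof.
  apply (@Rle_cv_lim (fun _ => - h x / beta) (fun n => W n x false));
    [intro n; apply vhatn_lower | apply cv_const | apply Hvhat].
Qed.

Lemma v_bellman_false (x : nat) :
  v x false = - h x + lam * v x true + mul * v (pred x) false
    + Rmax ((muh - mul) * v x false) (- c + (muh - mul) * v (pred x) false).
Proof.
  eapply (cv_recursion (fun n => V n x false));
    [intro n; apply vn_succ_false | apply Hv|].
  repeat apply CV_plus; [apply cv_const | apply cv_scal, Hv | apply cv_scal, Hv|].
  apply cv_max; [apply cv_scal, Hv|].
  apply CV_plus; [apply cv_const | apply cv_scal, Hv].
Qed.

Lemma v_bellman_true (x : nat) :
  v x true = Rmax (rw + v (S x) false) (v x false).
Proof.
  eapply (cv_recursion (fun n => V n x true)); [intro n; apply vn_succ_true | apply Hv|].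
  apply cv_max; [apply CV_plus; [apply cv_const|]|];
    apply (cv_shift1 (fun n => V n _ false)), Hv.
Qed.

Lemma vhat_bellman_false (x : nat) :
  vhat x false = - h x + lam * vhat x true + mul * vhat (pred x) false
    + (muh - mul) * vhat x false.
Proof.
  eapply (cv_recursion (fun n => W n x false));
    [intro n; apply vhatn_succ_false | apply Hvhat|].
  repeat apply CV_plus; [apply cv_const | apply cv_scal, Hvhat ..].
Qed.

Lemma vhat_bellman_true (x : nat) :
  vhat x true = Rmax (rw + vhat (S x) false) (vhat x false).
Proof.
  eapply (cv_recursion (fun n => W n x true)); [intro n; apply vhatn_succ_true | apply Hvhat|].
  apply cv_max; [apply CV_plus; [apply cv_const|]|];
    apply (cv_shift1 (fun n => W n _ false)), Hvhat.
Qed.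

(** The value of service flexibility [v - vhat] *)

Local Notation Delta := (fun k => v k false - v (S k) false).
Local Notation flex0 := (fun x => v x false - vhat x false).
Local Notation flex1 := (fun x => v x true - vhat x true).

Lemma flex_nonneg (i : bool) (x : nat) : 0 <= v x i - vhat x i.
Proof. pose proof (vhat_le_v x i). lra. Qed.

Lemma Delta_nondecr (k : nat) : Delta k <= Delta (S k).
Proof. apply v_dec_concave. Qed.

(* Where the combined problem admits (Delta x <= rw), admitting is also available
   to the subproblem, so the arrival value of flexibility is bounded by its value
   one state up; where it rejects, by its value in the current state. *)
Lemma flex_admit (x : nat) : Delta x <= rw -> flex1 x <= flex0 (S x).
Proof.
  intro Hx. simpl. rewrite v_bellman_true, vhat_bellman_true, Rmax_left by lra.
  pose proof (Rmax_l (rw + vhat (S x) false) (vhat x false)). lra.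
Qed.

Lemma flex_reject (x : nat) : ~ Delta x <= rw -> flex1 x <= flex0 x.
Proof.
  intro Hx. simpl. rewrite v_bellman_true, vhat_bellman_true, Rmax_right by lra.
  pose proof (Rmax_r (rw + vhat (S x) false) (vhat x false)). lra.
Qed.

Variable Ts : ext.
Hypothesis HTs : is_T (fun k => v k false - v (S k) false) (c / (muh - mul)) Ts.

(* Up to B^s = Ts + 1 the low service rate is optimal in the combined problem,
   so there the value of flexibility obeys the subproblem's balance equation. *)
Lemma low_rate_optimal (x : nat) :
  ext_le (Fin (Z.of_nat x)) (ext_add1 Ts) ->
  Rmax ((muh - mul) * v x false) (- c + (muh - mul) * v (pred x) false)
  = (muh - mul) * v x false.
Proof.
  intro Hx. apply Rmax_left. destruct x as [|y]; simpl; [lra|].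
  assert (Hy : ext_le (Fin (Z.of_nat y)) Ts) by (destruct Ts; simpl in *; lia).
  pose proof (T_below _ _ _ y Delta_nondecr HTs Hy) as Fy.
  apply (Rmult_le_compat_l (muh - mul)) in Fy; [|lra].
  replace ((muh - mul) * (c / (muh - mul))) with c in Fy by (field; lra).
  lra.
Qed.

Lemma flex_balanced (x : nat) :
  ext_le (Fin (Z.of_nat x)) (ext_add1 Ts) -> balanced lam mul muh flex0 flex1 x.
Proof.
  intro Hx. unfold balanced.
  pose proof (v_bellman_false x) as Ev. pose proof (vhat_bellman_false x) as Ew.
  rewrite (low_rate_optimal x Hx) in Ev. lra.
Qed.

Variable Bd : ext.
Hypothesis HBd : is_T (fun k => v k false - v (S k) false) rw Bd.
Hypothesis Hcond : ext_le (ext_add1 Bd) (ext_add1 Ts).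

(* Finite B^d: the maximum principle on [0, n] with n = max x (B^d + 1) <= B^s;
   states y <= B^d admit, and they lie strictly below n. *)
Lemma flex_zero_finite (d : Z) (x : nat) :
  Bd = Fin d -> ext_le (Fin (Z.of_nat x)) (ext_add1 Ts) -> flex0 x = 0.
Proof.
  intros Hd Hx. subst Bd.
  assert (Hd1 : (-1 <= d)%Z) by apply HBd.
  set (n := Nat.max x (Z.to_nat (d + 1))).
  apply (max_principle lam mul muh beta Hlam ltac:(lra) Hbeta Hnorm
           flex0 flex1 (flex_nonneg false) n); [| |lia].
  - intros y Hy. apply flex_balanced. simpl in *. destruct Ts; simpl in *; lia.
  - intros y Hy. destruct (Rle_dec (Delta y) rw) as [Hadm|Hrej].
    + right. split; [|apply flex_admit, Hadm].
      pose proof (T_upper _ _ _ y HBd Hadm). simpl in *. lia.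
    + left. apply flex_reject, Hrej.
Qed.

Hypothesis HA2 : exists (gamma : R) (J : nat), 0 <= gamma /\ gamma < 1 /\ (0 < J)%nat /\
  forall x : nat,
    ((lam + muh) / (lam + muh + beta)) ^ J * (rw + c + h (x + J)%nat)
    <= gamma * (rw + c + h x).

(* Infinite B^d: then B^s is infinite too, every state admits and is balanced, and
   the bound flex0 <= lam rw / beta + h / beta with Assumption 1(2) rules out the
   geometric growth a nonzero value of flexibility would have. *)
Lemma flex_zero_infinite (x : nat) : Bd = PInf -> flex0 x = 0.
Proof.
  intro Hd. subst Bd.
  assert (HTs_inf : Ts = PInf) by (destruct Ts; simpl in Hcond; tauto).
  destruct HA2 as [gamma [J [_ [Hg1 [HJ HA]]]]].
  rewrite Hnorm, Rdiv_1_r in HA.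
  assert (Hb : forall y, 0 <= h y / beta)
    by (intro y; unfold Rdiv; apply Rmult_le_pos; [apply h_nonneg | left; apply Rinv_0_lt_compat; lra]).
  apply (balanced_bounded_vanishes lam mul muh beta Hlam ltac:(lra) Hmulh Hbeta Hnorm
           flex0 flex1 (flex_nonneg false) (fun y => rw + c + h y) (lam * rw / beta) gamma J);
    [| | | | | lra | exact HJ | exact HA].
  - intro y. apply flex_balanced. rewrite HTs_inf. exact I.
  - intro y. apply flex_admit. apply (T_below _ _ _ y Delta_nondecr HBd). exact I.
  - unfold Rdiv. apply Rmult_le_pos; [nra | left; apply Rinv_0_lt_compat; lra].
  - intro y. pose proof (h_nonneg y). lra.
  - intro y. pose proof (v_upper y). pose proof (vhat_lower y).
    assert (h y / beta <= (rw + c + h y) / beta).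
    { unfold Rdiv. apply Rmult_le_compat_r; [left; apply Rinv_0_lt_compat|]; lra. }
    unfold Rdiv in *. simpl. lra.
Qed.

Lemma flex_zero (x : nat) :
  ext_le (Fin (Z.of_nat x)) (ext_add1 Ts) -> flex0 x = 0.
Proof.
  intro Hx. assert (Hcases : (exists d, Bd = Fin d) \/ Bd = PInf) by (destruct Bd; eauto).
  destruct Hcases as [[d Hd]|Hd].
  - exact (flex_zero_finite d x Hd Hx).
  - exact (flex_zero_infinite x Hd).
Qed.

Lemma flex_zero_admission (x : nat) :
  ext_le (Fin (Z.of_nat x)) (ext_add1 Bd) -> flex0 x = 0.
Proof.
  intro Hx. apply flex_zero. destruct Bd, Ts; simpl in *; lia.
Qed.

Lemma flex1_zero (x : nat) :
  ext_le (Fin (Z.of_nat x)) (ext_add1 Ts) -> flex1 x = 0.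
Proof.
  intro Hx. pose proof (flex_nonneg true x). simpl.
  destruct (Rle_dec (Delta x) rw) as [Hadm|Hrej].
  - assert (HSx : ext_le (Fin (Z.of_nat (S x))) (ext_add1 Bd))
      by (pose proof (T_upper _ _ _ x HBd Hadm); destruct Bd; simpl in *; lia).
    pose proof (flex_admit x Hadm) as Hle. pose proof (flex_zero_admission (S x) HSx).
    simpl in *. lra.
  - pose proof (flex_reject x Hrej) as Hle. pose proof (flex_zero x Hx).
    simpl in *. lra.
Qed.

Lemma Delta_le_Delta_hat (k : nat) :
  flex0 k = 0 -> Delta k <= vhat k false - vhat (S k) false.
Proof. intro Hk. pose proof (flex_nonneg false (S k)). simpl in *. lra. Qed.

(* Both problems admit in exactly the same states: on the admission region
   [0, B^d] both differences agree, and by induction a state admitted by the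
   subproblem lies in that region. *)
Lemma same_admission_region (k : nat) :
  Delta k <= rw <-> vhat k false - vhat (S k) false <= rw.
Proof.
  split.
  - intro Hk. pose proof (T_upper _ _ _ k HBd Hk) as HkB.
    assert (E0 : flex0 k = 0) by (apply flex_zero_admission; destruct Bd; simpl in *; lia).
    assert (E1 : flex0 (S k) = 0) by (apply flex_zero_admission; destruct Bd; simpl in *; lia).
    simpl in *. lra.
  - induction k as [|k IH]; intro Hk.
    + assert (E0 : flex0 0%nat = 0).
      { apply flex_zero_admission. destruct HBd as [H _]. destruct Bd; simpl in *; lia. }
      pose proof (Delta_le_Delta_hat 0 E0). simpl in *. lra.
    + pose proof (proj2 vhat_dec_concave k) as Hmon.
      pose proof (T_upper _ _ _ k HBd (IH ltac:(lra))) as HkB.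
      assert (E : flex0 (S k) = 0) by (apply flex_zero_admission; destruct Bd; simpl in *; lia).
      pose proof (Delta_le_Delta_hat (S k) E). lra.
Qed.

Lemma admission_threshold_preserved :
  is_T (fun k => vhat k false - vhat (S k) false) rw Bd.
Proof. exact (T_transfer _ _ rw rw Bd same_admission_region HBd). Qed.

Lemma flexibility_vanishes (x : nat) (i : bool) :
  ext_le (Fin (Z.of_nat x)) (ext_add1 Ts) -> v x i - vhat x i = 0.
Proof. intro Hx. destruct i; [apply flex1_zero | apply flex_zero]; exact Hx. Qed.

End Model.

Theorem proposition2
  (lam mul muh beta rw c : R) (h : nat -> R)
  (Hlam : 0 < lam) (Hmul : 0 < mul) (Hmulh : mul < muh)
  (Hrw : 0 <= rw) (Hc : 0 < c) (Hbeta : 0 < beta)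
  (Hnorm : lam + muh + beta = 1)
  (Hh0 : h 0%nat = 0)
  (Hmono : forall x : nat, h x <= h (S x))
  (Hconv : forall x : nat, h (S x) - h x <= h (S (S x)) - h (S x))
  (* Assumption 1 (1) *)
  (HA1 : exists theta : R, 1 < theta /\
           forall x : nat, (0 < x)%nat -> h (S x) <= theta * h x)
  (* Assumption 1 (2) *)
  (HA2 : exists (gamma : R) (J : nat), 0 <= gamma /\ gamma < 1 /\ (0 < J)%nat /\
           forall x : nat,
             ((lam + muh) / (lam + muh + beta)) ^ J * (rw + c + h (x + J)%nat)
             <= gamma * (rw + c + h x))
  (* infinite-horizon values as pointwise limits *)
  (v vhat : nat -> bool -> R)
  (Hv : forall x i, Un_cv (fun n => vn lam mul muh rw c h n x i) (v x i))
  (Hvhat : forall x i, Un_cv (fun n => vhatn lam mul muh rw h n x i) (vhat x i))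
  (* thresholds *)
  (Ts Bd Bdhat : ext)
  (HTs : is_T (fun k => v k false - v (S k) false) (c / (muh - mul)) Ts)
  (HBd : is_T (fun k => v k false - v (S k) false) rw Bd)
  (HBdhat : is_T (fun k => vhat k false - vhat (S k) false) rw Bdhat)
  (* B^s = 1 + T_{Delta(.,0)}(c/delta) >= B^d + 1 *)
  (Hcond : ext_le (ext_add1 Bd) (ext_add1 Ts)) :
  Bdhat = Bd /\
  (forall (x : nat) (i : bool),
     ext_le (Fin (Z.of_nat x)) (ext_add1 Ts) -> v x i - vhat x i = 0).
Proof.
  split.
  - apply (T_unique _ rw _ _ HBdhat).
    exact (admission_threshold_preserved lam mul muh beta rw c h Hlam Hmul Hmulh Hrw Hc
             Hbeta Hnorm Hh0 Hmono Hconv v vhat Hv Hvhat Ts HTs Bd HBd Hcond HA2).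
  - exact (flexibility_vanishes lam mul muh beta rw c h Hlam Hmul Hmulh Hrw Hc
             Hbeta Hnorm Hh0 Hmono Hconv v vhat Hv Hvhat Ts HTs Bd HBd Hcond HA2).
Qed.
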